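(* Let $\tilde P$ be a convex polygon with $k$ vertices $\tilde P_1,\dots,\tilde P_k$, and suppose that exactly $j$ pairs of its sides are parallel, $0\le j\le k/2$. Set $n=k-j$. Then the list of vertices of $\tilde P$ can be rewritten (allowing consecutive repetitions of a vertex) as a list $P_1,\dots,P_{2n}$ (indices modulo $2n$) such that for each $1\le i\le n$, either the side $P_iP_{i+1}$ is parallel to the side $P_{i+n}P_{i+n+1}$, or one of these two sides, say $P_{i+n}P_{i+n+1}$, degenerates to a point; in the latter case the other side $P_iP_{i+1}$ is non-degenerate and the line through $P_{i+n}=P_{i+n+1}$ parallel to $P_iP_{i+1}$ lies outside the interior of $P$. *)

From HB Require Import structures.
From mathcomp Require Import all_boot all_order all_algebra.
Set Implicit Arguments. Unset Strict Implicit. Unset Printing Implicit Defensive.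
Import Order.TTheory GRing.Theory Num.Theory.
Local Open Scope ring_scope.

Section Plane.
Variable R : realFieldType.
Definition pt := (R * R)%type.

Definition psub (a b : pt) : pt := (a.1 - b.1, a.2 - b.2).
Definition padd (a b : pt) : pt := (a.1 + b.1, a.2 + b.2).
Definition pscale (t : R) (a : pt) : pt := (t * a.1, t * a.2).
Definition cross (u v : pt) : R := u.1 * v.2 - u.2 * v.1.

Definition vtx (s : seq pt) (m : nat) : pt := nth (0, 0) s (m %% size s).
Definition side_dir (s : seq pt) (m : nat) : pt := psub (vtx s m.+1) (vtx s m).

(* s lists the k = size s >= 3 vertices of a (strictly) convex polygon in
   cyclic order (either orientation): for every side, all the other vertices
   lie strictly on one and the same side of the line through it. *)
Definition convex_polygon (s : seq pt) : Prop :=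
  (3 <= size s)%N /\
  ((forall i j, (i < size s)%N -> (j < size s)%N -> j != i ->
      j != (i.+1 %% size s)%N ->
      0 < cross (side_dir s i) (psub (vtx s j) (vtx s i))) \/
   (forall i j, (i < size s)%N -> (j < size s)%N -> j != i ->
      j != (i.+1 %% size s)%N ->
      cross (side_dir s i) (psub (vtx s j) (vtx s i)) < 0)).

Definition num_parallel_pairs (s : seq pt) : nat :=
  #|[set ij : 'I_(size s) * 'I_(size s) |
       ((ij.1 < ij.2)%N && (cross (side_dir s ij.1) (side_dir s ij.2) == 0))]|.

Definition poly_interior (s : seq pt) (x : pt) : Prop :=
  (forall i, (i < size s)%N -> 0 < cross (side_dir s i) (psub x (vtx s i))) \/
  (forall i, (i < size s)%N -> cross (side_dir s i) (psub x (vtx s i)) < 0).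

(* Q is the cyclic vertex list of s rewritten with consecutive repetitions
   allowed: Q_m = s_(f m), and going from Q_m to Q_(m+1) (cyclically) either
   stays at the same vertex or advances to the next one, advancing exactly
   size s times in total (so the polygon is traversed exactly once). *)
Definition vertex_relisting (s Q : seq pt) : Prop :=
  exists f : nat -> nat,
    (forall m, (m < size Q)%N -> (f m < size s)%N /\ vtx Q m = vtx s (f m)) /\
    (forall m, (m < size Q)%N ->
        f (m.+1 %% size Q)%N = f m \/ f (m.+1 %% size Q)%N = ((f m).+1 %% size s)%N) /\
    #|[set m : 'I_(size Q) | f (m.+1 %% size Q)%N != f m]| = size s.

Definition parallel_sides (a b c d : pt) : Prop :=
  b <> a /\ d <> c /\ cross (psub b a) (psub d c) = 0.

Definition degenerate_side (s : seq pt) (a b c d : pt) : Prop :=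
  c = d /\ b <> a /\
  forall t : R, ~ poly_interior s (padd c (pscale t (psub b a))).

End Plane.

From HB Require Import structures.
From mathcomp Require Import all_boot all_order all_algebra.
From mathcomp Require Import ring lra zify.
Import Order.TTheory GRing.Theory Num.Theory.

(* Orient the polygon so that it turns left, and measure directions from its
   first side e_0. The directions e_0, ..., e_(p-1) of the sides before the
   first one that has turned by a half turn, and the reversed directions
   -e_p, ..., -e_(k-1) of the remaining sides, all lie in the half-plane left
   of e_0 (together with the ray of e_0), and convexity sorts each list by
   angle. Merge the two lists by angle with a pointer a running through the
   first and a pointer b through the second, advancing both pointers when e_a
   and e_b are parallel. Listing the n vertices v_a seen by the first pointer,
   then the n vertices v_b seen by the second, gives the 2n-gon. A step that
   advances a alone pairs the side v_a v_(a+1) with the degenerate side at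
   v_b; as e_a lies angularly between the two sides at v_b, the line through
   v_b parallel to e_a supports the polygon. Every parallel pair is met by
   exactly one double step, hence k = n + j. *)

Local Open Scope ring_scope.

Lemma modnD_neq k d m : (0 < d < k)%N -> ((m + d) %% k != m %% k)%N.
Proof.
case/andP=> d0 dk; apply/negP; rewrite eqn_mod_dvd ?leq_addr // addKn => /dvdn_leq.
by move/(_ d0); rewrite leqNgt dk.
Qed.

Lemma exists_succ_crossing (f : nat -> nat) i T :
  (forall t, f t.+1 <= (f t).+1)%N -> (f 0 <= i)%N -> (i < f T)%N ->
  exists t, [/\ (t < T)%N, f t = i & f t.+1 = i.+1].
Proof.
move=> hf h0; elim: T => [|T IH] hT; first lia.
have [/IH [t [? ? ?]]|h] := ltnP i (f T); first by exists t; split => //; lia.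
by exists T; have := hf T; split => //; lia.
Qed.

Lemma neq_subn x y : (x <= y <= x.+1)%N -> ((y != x) : nat) = (y - x)%N.
Proof. by case/andP => h1 h2; case: (eqVneq y x) => [->|h]; rewrite ?subnn //=; lia. Qed.

Lemma telescope_sumn_ord n {f : nat -> nat} : {homo f : x y / (x <= y)%N} ->
  (\sum_(t < n) (f t.+1 - f t) = f n - f 0)%N.
Proof. by move=> hf; rewrite -(big_mkord xpredT (fun t => f t.+1 - f t)%N) telescope_sumn. Qed.

Definition opposite_sides_paired {R : realFieldType} (s Q : seq (pt R)) (n : nat) : Prop :=
  size Q = (2 * n)%N /\ vertex_relisting s Q /\
  forall i, (i < n)%N ->
    parallel_sides (vtx Q i) (vtx Q i.+1) (vtx Q (i + n)) (vtx Q (i + n).+1) \/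
    degenerate_side s (vtx Q i) (vtx Q i.+1) (vtx Q (i + n)) (vtx Q (i + n).+1) \/
    degenerate_side s (vtx Q (i + n)) (vtx Q (i + n).+1) (vtx Q i) (vtx Q i.+1).

Section Orientation.
Local Set Implicit Arguments. Local Unset Strict Implicit.
Variables (R : realFieldType) (sg : R).
Hypothesis sg_sq : sg * sg = 1.

Definition ocross (u w : pt R) := sg * cross u w.
Definition dot (u w : pt R) : R := u.1 * w.1 + u.2 * w.2.
Definition popp (u : pt R) : pt R := (- u.1, - u.2).

Lemma ocrossC u w : ocross u w = - ocross w u.
Proof. rewrite /ocross /cross; ring. Qed.

Lemma ocrossNl u w : ocross (popp u) w = - ocross u w.
Proof. rewrite /ocross /cross /popp /=; ring. Qed.

Lemma ocrossNr u w : ocross u (popp w) = - ocross u w.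
Proof. rewrite /ocross /cross /popp /=; ring. Qed.

Lemma ocrossNN u w : ocross (popp u) (popp w) = ocross u w.
Proof. by rewrite ocrossNl ocrossNr opprK. Qed.

Lemma ocrossNlC u w : ocross (popp u) w = ocross w u.
Proof. by rewrite ocrossNl -ocrossC. Qed.

Lemma ocrossNrC u w : ocross u (popp w) = ocross w u.
Proof. by rewrite ocrossNr -ocrossC. Qed.

Lemma ocrossxx u : ocross u u = 0.
Proof. rewrite /ocross /cross; ring. Qed.

Lemma dotNr u w : dot u (popp w) = - dot u w.
Proof. rewrite /dot /popp /=; ring. Qed.

Lemma ocrossM a b c d : ocross a b * ocross c d = cross a b * cross c d.
Proof. by rewrite /ocross mulrACA sg_sq mul1r. Qed.

Lemma ocross_eq0 u w : ocross u w = 0 -> cross u w = 0.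
Proof.
have sg0 : sg != 0 by apply: contra_eq_neq sg_sq => ->; rewrite mul0r eq_sym oner_neq0.
by move/eqP; rewrite mulf_eq0 (negbTE sg0) => /eqP.
Qed.

Lemma ocross_plucker o x y z :
  ocross x z * ocross o y = ocross x y * ocross o z + ocross y z * ocross o x.
Proof.
rewrite !ocrossM; case: o => ? ?; case: x => ? ?; case: y => ? ?; case: z => ? ?.
rewrite /cross /=; ring.
Qed.

Lemma dot_ocross o x y :
  dot o o * ocross x y = dot o x * ocross o y - ocross o x * dot o y.
Proof.
rewrite /ocross /dot /cross; case: o => ? ?; case: x => ? ?; case: y => ? ? /=; ring.
Qed.

Lemma dot_gt0 u : u <> (0, 0) -> 0 < dot u u.
Proof.
case: u => u1 u2 u0; rewrite /dot /= -!expr2 lt0r paddr_eq0 ?sqr_ge0 // !sqrf_eq0.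
rewrite addr_ge0 ?sqr_ge0 // andbT; apply/negP => /andP [/eqP h1 /eqP h2].
by apply: u0; rewrite h1 h2.
Qed.

(* The half-open half-plane to the left of o, including the ray through o:
   inside it, the sign of [ocross] is a strict angular order. *)
Definition in_halfplane o u := 0 < ocross o u \/ (ocross o u = 0 /\ 0 < dot o u).

Lemma halfplane_ocross_trans o x y z : 0 < dot o o ->
  in_halfplane o x -> in_halfplane o y -> in_halfplane o z ->
  [/\ (0 <= ocross x y -> 0 <= ocross y z -> 0 <= ocross x z),
      (0 < ocross x y -> 0 <= ocross y z -> 0 < ocross x z) &
      (0 <= ocross x y -> 0 < ocross y z -> 0 < ocross x z)].
Proof.
move=> o0 hx hy hz; have P := ocross_plucker o x y z.
have Dxy := dot_ocross o x y; have Dyz := dot_ocross o y z; have Dxz := dot_ocross o x z.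
move: P Dxy Dyz Dxz o0 hx hy hz; rewrite /in_halfplane.
move: (ocross x z) (ocross o y) (ocross x y) (ocross o z) (ocross y z) (ocross o x)
  (dot o o) (dot o x) (dot o y) (dot o z) => ? ? ? ? ? ? ? ? ? ? ? ? ? ? ? hx hy hz.
by case: hx => [|[]]; case: hy => [|[]]; case: hz => [|[]]; split; nra.
Qed.

End Orientation.

Section ConvexPolygon.
Variables (R : realFieldType) (s : seq (pt R)) (sg : R).
Hypothesis sg_sq : sg * sg = 1.
Local Notation k := (size s).
Hypothesis size_ge3 : (3 <= k)%N.
(* [sg] is the orientation sign that makes the polygon turn left. *)
Hypothesis convex : forall i j, (i < k)%N -> (j < k)%N -> j != i -> j != (i.+1 %% k)%N ->
  0 < ocross sg (side_dir s i) (psub (vtx s j) (vtx s i)).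
Local Notation v := (vtx s).
Local Notation e := (side_dir s).
Local Notation C a b := (ocross sg (e a) (e b)).

Lemma size_gt0 : (0 < k)%N.
Proof. exact: leq_trans size_ge3. Qed.

Lemma modSn m : ((m %% k).+1 %% k = m.+1 %% k)%N.
Proof. by rewrite -addn1 modnDml addn1. Qed.

Lemma vtx_mod m : v (m %% k) = v m.
Proof. by rewrite /vtx modn_mod. Qed.

Lemma side_dir_mod m : e (m %% k) = e m.
Proof. by rewrite /side_dir /vtx modn_mod modSn. Qed.

Lemma side_dir_size : e k = e 0.
Proof. by rewrite -side_dir_mod modnn. Qed.

Lemma convex_mod i j : (j %% k != i %% k)%N -> (j %% k != i.+1 %% k)%N ->
  0 < ocross sg (e i) (psub (v j) (v i)).
Proof.
move=> ji ji1; have := @convex (i %% k) (j %% k) (ltn_pmod i size_gt0) (ltn_pmod j size_gt0) ji.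
by rewrite modSn !vtx_mod side_dir_mod => /(_ ji1).
Qed.

Lemma ocross_side_succ m : 0 < C m m.+1.
Proof.
have := @convex_mod m m.+2.
have -> : ocross sg (e m) (psub (v m.+2) (v m)) = C m m.+1.
  rewrite /ocross /side_dir /psub /cross /=; ring.
apply; first by rewrite -addn2 modnD_neq.
by rewrite -[m.+2]addn1 modnD_neq //= ltnW.
Qed.

Lemma side_dir_neq0 m : e m <> (0, 0).
Proof.
by move=> e0; have := ocross_side_succ m; rewrite e0 /ocross /cross /= !mul0r subrr mulr0 ltxx.
Qed.

Lemma vtx_succ_neq m : v m.+1 <> v m.
Proof. by move=> h; apply: (side_dir_neq0 m); rewrite /side_dir h /psub !subrr. Qed.

Lemma dot_side0_gt0 : 0 < dot (e 0) (e 0).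
Proof. exact: dot_gt0 (side_dir_neq0 0). Qed.

Lemma ocross_last_le0 : (0 < k.-1)%N && (C 0 k.-1 <= 0).
Proof.
apply/andP; split; first by rewrite -ltnS prednK ?size_gt0 // (leq_trans _ size_ge3).
have := ocross_side_succ k.-1; rewrite prednK ?size_gt0 // side_dir_size ocrossC.
by rewrite oppr_gt0 => /ltW.
Qed.

Lemma exists_half_turn : exists m, (0 < m)%N && (C 0 m <= 0).
Proof. by exists k.-1; exact: ocross_last_le0. Qed.

(* The first side whose direction has turned by at least a half turn from [e 0]. *)
Definition pivot := ex_minn exists_half_turn.

Lemma pivotP : [/\ (0 < pivot)%N, C 0 pivot <= 0 &
  forall m, (0 < m)%N -> C 0 m <= 0 -> (pivot <= m)%N].
Proof.
rewrite /pivot; case: ex_minnP => m /andP [m0 cm] minm; split => // n n0 cn.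
by apply: minm; rewrite n0.
Qed.

Lemma pivot_lt_size : (pivot < k)%N.
Proof.
have /andP [h0 h1] := ocross_last_le0; case: pivotP => _ _ /(_ _ h0 h1).
by move/leq_ltn_trans; apply; rewrite prednK ?size_gt0.
Qed.

Lemma pivot_ge2 : (2 <= pivot)%N.
Proof.
case: pivotP => p0 pn _; rewrite ltn_neqAle p0 andbT; apply/eqP => p1.
by move: pn; rewrite -p1 leNgt ocross_side_succ.
Qed.

Lemma ocross_lt_pivot m : (0 < m)%N -> (m < pivot)%N -> 0 < C 0 m.
Proof.
case: pivotP => _ _ minp m0 mp; rewrite ltNge; apply/negP => /(minp m m0).
by rewrite leqNgt mp.
Qed.

(* Convexity at the vertex [v 1]: once the sides have turned past a half turn
   they cannot come back, by the Plucker identity for e_0, e_m, v_1 - v_(m+1)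
   and e_(m+1). *)
Lemma ocross_turn_succ m : (2 <= m)%N -> (m + 2 <= k)%N -> C 0 m <= 0 -> C 0 m.+1 < 0.
Proof.
move=> m2 mk cm.
have F1 : 0 < ocross sg (e m) (psub (v 1) (v m)).
  by apply: convex_mod; rewrite !modn_small //; lia.
have F2 : 0 < ocross sg (e m.+1) (psub (v 1) (v m.+1)).
  apply: convex_mod; first by rewrite !modn_small //; lia.
  case: (ltngtP m.+2 k) => [lt|gt|->]; [by rewrite !modn_small //; lia | lia |].
  by rewrite modnn modn_small //; lia.
have F3 : 0 < ocross sg (e 0) (psub (v m.+1) (v 0)).
  by apply: convex_mod; rewrite ?mod0n !modn_small //; lia.
have P := ocross_plucker sg_sq (e 0) (e m) (psub (v 1) (v m.+1)) (e m.+1).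
have E1 : ocross sg (e m) (psub (v 1) (v m.+1)) = ocross sg (e m) (psub (v 1) (v m)).
  rewrite /ocross /side_dir /psub /cross /=; ring.
have E2 : ocross sg (e 0) (psub (v 1) (v m.+1)) = - ocross sg (e 0) (psub (v m.+1) (v 0)).
  rewrite /ocross /side_dir /psub /cross /=; ring.
rewrite E1 E2 [ocross _ (psub _ _) (e m.+1)]ocrossC in P.
have := ocross_side_succ m.
by move: P F1 F2 F3 cm; move: (C m m.+1) (C 0 m) (C 0 m.+1) => *; nra.
Qed.

Lemma ocross_gt_pivot m : (pivot < m)%N -> (m < k)%N -> C 0 m < 0.
Proof.
have p2 := pivot_ge2; have pk := pivot_lt_size.
elim: m => // m IH pm mk; case: (ltngtP pivot m) => [pm'|pm'|<-]; last 2 first.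
- lia.
- by apply: ocross_turn_succ; [lia|lia|case: pivotP].
by apply: ocross_turn_succ; [lia|lia|]; apply/ltW/IH; lia.
Qed.

Lemma front_in_halfplane {a} : (a < pivot)%N -> in_halfplane sg (e 0) (e a).
Proof.
case: a => [_|a ap]; last by left; apply: ocross_lt_pivot.
by right; split; [exact: ocrossxx | exact: dot_side0_gt0].
Qed.

Lemma dot_side0_pivot_lt0 : C 0 pivot = 0 -> dot (e 0) (e pivot) < 0.
Proof.
move=> c0; have p2 := pivot_ge2.
have D := dot_ocross sg (e 0) (e pivot.-1) (e pivot).
have c1 := ocross_side_succ pivot.-1; rewrite prednK in c1; last lia.
have u1 : 0 < C 0 pivot.-1 by apply: ocross_lt_pivot; lia.
have nn := dot_side0_gt0.
rewrite c0 in D; move: D c1 u1 nn.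
by move: (dot (e 0) (e 0)) (C pivot.-1 pivot) (C 0 pivot.-1) (dot (e 0) (e pivot)) => *; nra.
Qed.

Lemma back_in_halfplane {b} : (pivot <= b)%N -> (b < k)%N ->
  in_halfplane sg (e 0) (popp (e b)).
Proof.
move=> pb bk; rewrite /in_halfplane ocrossNr dotNr !oppr_gt0.
case: (ltngtP pivot b) => [pb'||<-]; first by left; apply: ocross_gt_pivot.
  lia.
case: pivotP => _ cp _; case: (ltrgt0P (C 0 pivot)) => [cp'|cp'|cp0].
- by move: cp; rewrite leNgt cp'.
- by left.
- by right; rewrite cp0 oppr0; split => //; exact: dot_side0_pivot_lt0.
Qed.

Lemma ocross_front {a a'} : (a < a')%N -> (a' < pivot)%N -> 0 < C a a'.
Proof.
elim: a' => // a' IH aa' a'p; case: (ltngtP a a') => [lt||<-]; last 2 first.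
- lia.
- exact: ocross_side_succ.
have [_ _ T] := halfplane_ocross_trans sg_sq dot_side0_gt0
  (front_in_halfplane (ltn_trans aa' a'p)) (front_in_halfplane (ltnW a'p))
  (front_in_halfplane a'p).
by apply: T; [apply/ltW/IH => //; exact: ltnW | exact: ocross_side_succ].
Qed.

Lemma ocross_front_le {a a'} : (a <= a')%N -> (a' < pivot)%N -> 0 <= C a a'.
Proof.
rewrite leq_eqVlt => /orP [/eqP ->|aa'] a'p; first by rewrite ocrossxx.
exact/ltW/ocross_front.
Qed.

Lemma ocross_back {b b'} : (pivot <= b)%N -> (b < b')%N -> (b' < k)%N -> 0 < C b b'.
Proof.
move=> pb; elim: b' => // b' IH bb' b'k; case: (ltngtP b b') => [lt||<-]; last 2 first.
- lia.
- exact: ocross_side_succ.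
have [_ _ T] := halfplane_ocross_trans sg_sq dot_side0_gt0
  (back_in_halfplane pb (ltn_trans bb' b'k))
  (back_in_halfplane (leq_trans pb (ltnW lt)) (ltnW b'k))
  (back_in_halfplane (leq_trans pb (ltnW bb')) b'k).
rewrite -ocrossNN; apply: T; rewrite ocrossNN; last exact: ocross_side_succ.
by apply/ltW/IH => //; exact: ltnW.
Qed.

Lemma ocross_back_le {b b'} : (pivot <= b)%N -> (b <= b')%N -> (b' < k)%N -> 0 <= C b b'.
Proof.
move=> pb; rewrite leq_eqVlt => /orP [/eqP ->|bb'] b'k; first by rewrite ocrossxx.
exact/ltW/ocross_back.
Qed.

(* The merge of e_0, ..., e_(pivot-1) with -e_pivot, ..., -e_(k-1) by angle,
   with pointers [a] and [b]: the last direction passed in each list precedes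
   the next direction of the other one. *)
Definition merge_inv (a b : nat) :=
  [/\ [&& (a <= pivot)%N, (pivot <= b)%N & (b <= k)%N], (a = 0%N -> b = pivot),
      ((a < pivot)%N -> (pivot < b)%N -> 0 <= C a b.-1) &
      ((0 < a)%N -> (b < k)%N -> C a.-1 b <= 0)].

Lemma merge_inv_adv_a a b : merge_inv a b -> (a < pivot)%N ->
  ((b < k)%N -> C a b <= 0) -> merge_inv a.+1 b.
Proof.
case=> /and3P [_ pb bk] _ cb1 _ ap cab; split => //.
- by apply/and3P.
- move=> a1p pb'; have pb1 : (pivot <= b.-1)%N by lia.
  have b1k : (b.-1 < k)%N by lia.
  have [T _ _] := halfplane_ocross_trans sg_sq dot_side0_gt0
    (back_in_halfplane pb1 b1k) (front_in_halfplane ap) (front_in_halfplane a1p).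
  rewrite -ocrossNlC; apply: T; rewrite ?ocrossNlC; first exact: cb1.
  exact/ltW/ocross_side_succ.
Qed.

Lemma merge_inv_adv_b a b : merge_inv a b -> (b < k)%N -> (0 < a)%N ->
  ((a < pivot)%N -> 0 < C a b) -> merge_inv a b.+1.
Proof.
case=> /and3P [ap pb _] _ _ ca1 bk a0 cab; split => //; first by apply/and3P; split => //; lia.
- by move=> a_eq0; rewrite a_eq0 in a0.
- by move=> /cab /ltW.
move=> _ b1k; have a1p : (a.-1 < pivot)%N by lia.
have [_ _ T] := halfplane_ocross_trans sg_sq dot_side0_gt0 (front_in_halfplane a1p)
  (back_in_halfplane pb bk) (back_in_halfplane (leq_trans pb (leqnSn b)) b1k).
have : 0 < ocross sg (e a.-1) (popp (e b.+1)).
  apply: T; first by rewrite ocrossNrC ocrossC oppr_ge0; exact: ca1.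
  by rewrite ocrossNN; exact: ocross_side_succ.
by rewrite ocrossNrC ocrossC oppr_gt0 => /ltW.
Qed.

Lemma merge_inv_adv_ab a b : merge_inv a b -> (a < pivot)%N -> (b < k)%N ->
  C a b = 0 -> merge_inv a.+1 b.+1.
Proof.
case=> /and3P [_ pb _] _ _ _ ap bk c0; split => //; first by apply/and3P; split => //; lia.
- move=> a1p _ /=.
  have [_ _ T] := halfplane_ocross_trans sg_sq dot_side0_gt0 (back_in_halfplane pb bk)
    (front_in_halfplane ap) (front_in_halfplane a1p).
  rewrite -ocrossNlC; apply/ltW/T; rewrite ?ocrossNlC ?c0 //; exact: ocross_side_succ.
- move=> _ b1k /=.
  have [_ _ T] := halfplane_ocross_trans sg_sq dot_side0_gt0 (front_in_halfplane ap)
    (back_in_halfplane pb bk) (back_in_halfplane (leq_trans pb (leqnSn b)) b1k).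
  have : 0 < ocross sg (e a) (popp (e b.+1)).
    apply: T; first by rewrite ocrossNrC ocrossC c0 oppr0.
    by rewrite ocrossNN; exact: ocross_side_succ.
  by rewrite ocrossNrC ocrossC oppr_gt0 => /ltW.
Qed.

Lemma adv_a_supporting a b : merge_inv a b -> (a < pivot)%N ->
  ((b < k)%N -> C a b <= 0) -> C a b.-1 * C a b <= 0.
Proof.
case=> /and3P [_ pb bk] _ cb1 _ ap cab; rewrite mulr_ge0_le0 //.
  case: (ltngtP pivot b) => [lt|gt|eq]; [exact: cb1 | lia |].
  by rewrite -eq; apply: ocross_front_le; have := pivot_ge2; lia.
case: (ltngtP b k) => [lt|gt|eq]; [exact: cab | lia |].
by rewrite eq side_dir_size ocrossC oppr_le0; exact: ocross_front_le.
Qed.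

Lemma adv_b_supporting a b : merge_inv a b -> (b < k)%N -> (0 < a)%N ->
  ((a < pivot)%N -> 0 < C a b) -> C b a.-1 * C b a <= 0.
Proof.
case=> /and3P [ap pb _] _ _ ca1 bk a0 cab; rewrite mulr_ge0_le0 //.
  by rewrite ocrossC oppr_ge0; exact: ca1.
rewrite ocrossC oppr_le0; case: (ltngtP a pivot) => [lt|gt|->]; [exact/ltW/cab | lia |].
exact: ocross_back_le.
Qed.

Definition merge_step (ab : nat * nat) : nat * nat :=
  let: (a, b) := ab in
  if (a < pivot)%N then
    if (b < k)%N then
      if C a b < 0 then (a.+1, b) else if 0 < C a b then (a, b.+1) else (a.+1, b.+1)
    else (a.+1, b)
  else if (b < k)%N then (a, b.+1) else (a, b).

Definition adv_a a b := [/\ merge_inv a.+1 b, (a < pivot)%N,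
  ((b < k)%N -> C a b < 0) & C a b.-1 * C a b <= 0].
Definition adv_b a b := [/\ merge_inv a b.+1, (b < k)%N, (0 < a)%N,
  ((a < pivot)%N -> 0 < C a b) & C b a.-1 * C b a <= 0].
Definition adv_ab a b := [/\ merge_inv a.+1 b.+1, (a < pivot)%N, (b < k)%N & C a b = 0].

Lemma merge_stepP {a b} : merge_inv a b -> (a, b) != (pivot, k) ->
  [\/ merge_step (a, b) = (a.+1, b) /\ adv_a a b,
      merge_step (a, b) = (a, b.+1) /\ adv_b a b |
      merge_step (a, b) = (a.+1, b.+1) /\ adv_ab a b].
Proof.
move=> I nf; have [/and3P [ap pb bk] a0 _ _] := I.
have advA : (a < pivot)%N -> ((b < k)%N -> C a b < 0) -> adv_a a b.
  move=> ap' cab; have cab' : (b < k)%N -> C a b <= 0 by move/cab/ltW.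
  by split => //; [exact: merge_inv_adv_a | exact: adv_a_supporting].
have advB : (b < k)%N -> (0 < a)%N -> ((a < pivot)%N -> 0 < C a b) -> adv_b a b.
  by move=> bk' a0' cab; split => //; [exact: merge_inv_adv_b | exact: adv_b_supporting].
rewrite /merge_step; case: ifP => ap'; last first.
  case: ifP => bk'; last first.
    have ea : a = pivot by lia.
    have eb : b = k by lia.
    by rewrite ea eb eqxx in nf.
  by constructor 2; split => //; apply: advB; rewrite ?ap' //; have := pivot_ge2; lia.
case: ifP => bk'; last by constructor 1; split => //; apply: advA; rewrite ?bk'.
case: ltrgt0P => cab; [constructor 2 | constructor 1 | constructor 3]; split => //.
- apply: advB => //; rewrite lt0n; apply/eqP => a_eq0.
  by move: cab; rewrite a_eq0 (a0 a_eq0) ltNge; case: pivotP => _ ->.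
- exact: advA.
- by split => //; exact: merge_inv_adv_ab.
Qed.

Definition state t := iter t merge_step (0%N, pivot).
Definition pa t := (state t).1.
Definition pb t := (state t).2.

Lemma stateE t : state t = (pa t, pb t).
Proof. by rewrite /pa /pb; case: (state t). Qed.

Lemma stateS t : state t.+1 = merge_step (pa t, pb t).
Proof. by rewrite -stateE. Qed.

Lemma pa0 : pa 0 = 0%N. Proof. by []. Qed.
Lemma pb0 : pb 0 = pivot. Proof. by []. Qed.

Lemma merge_step_final : merge_step (pivot, k) = (pivot, k).
Proof. by rewrite /merge_step !ltnn. Qed.

Lemma merge_inv0 : merge_inv 0 pivot.
Proof.
have pk := pivot_lt_size; split => //; first by apply/and3P; split => //; lia.
by rewrite ltnn.
Qed.

Lemma merge_inv_final : merge_inv pivot k.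
Proof.
have pk := pivot_lt_size; have p2 := pivot_ge2.
by split; rewrite ?ltnn //; [apply/and3P; split => //; lia | lia].
Qed.

Lemma merge_inv_state t : merge_inv (pa t) (pb t).
Proof.
elim: t => [|t IH]; first exact: merge_inv0.
rewrite /pa /pb stateS; case: (eqVneq (state t) (pivot, k)) => [|nf].
  by rewrite stateE => -[-> ->]; rewrite merge_step_final; exact: merge_inv_final.
by rewrite stateE in nf; case: (merge_stepP IH nf) => -[-> []].
Qed.

Lemma pointer_stepP {t} : state t != (pivot, k) ->
  [\/ [/\ pa t.+1 = (pa t).+1, pb t.+1 = pb t & adv_a (pa t) (pb t)],
      [/\ pa t.+1 = pa t, pb t.+1 = (pb t).+1 & adv_b (pa t) (pb t)] |
      [/\ pa t.+1 = (pa t).+1, pb t.+1 = (pb t).+1 & adv_ab (pa t) (pb t)]].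
Proof.
rewrite stateE /pa /pb stateS -/(pa t) -/(pb t) => nf.
by case: (merge_stepP (merge_inv_state t) nf) => -[-> h];
  [constructor 1 | constructor 2 | constructor 3].
Qed.

Lemma state_step_le t :
  [/\ (pa t <= pa t.+1 <= (pa t).+1)%N & (pb t <= pb t.+1 <= (pb t).+1)%N].
Proof.
case: (eqVneq (state t) (pivot, k)) => [fin|/pointer_stepP].
  have := stateS t; rewrite -stateE fin merge_step_final /pa /pb => -> /=.
  by rewrite fin /= !leqnn !leqnSn.
by case=> -[-> -> _]; rewrite !leqnn !leqnSn.
Qed.

Lemma pa_le_succ t : (pa t.+1 <= (pa t).+1)%N.
Proof. by case: (state_step_le t) => /andP []. Qed.

Lemma pb_le_succ t : (pb t.+1 <= (pb t).+1)%N.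
Proof. by case: (state_step_le t) => _ /andP []. Qed.

Lemma pa_mono : {homo pa : i j / (i <= j)%N}.
Proof. by apply: homo_leq => // [|i]; [exact: leq_trans | case: (state_step_le i) => /andP []]. Qed.

Lemma pb_mono : {homo pb : i j / (i <= j)%N}.
Proof.
by apply: homo_leq => // [|i]; [exact: leq_trans | case: (state_step_le i) => _ /andP []].
Qed.

Lemma pa_le_pivot t : (pa t <= pivot)%N.
Proof. by case: (merge_inv_state t) => /and3P []. Qed.

Lemma pivot_le_pb t : (pivot <= pb t)%N.
Proof. by case: (merge_inv_state t) => /and3P []. Qed.

Lemma pb_le_size t : (pb t <= k)%N.
Proof. by case: (merge_inv_state t) => /and3P []. Qed.

Lemma state_progress t : state t = (pivot, k) \/ (pivot + t <= pa t + pb t)%N.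
Proof.
elim: t => [|t IH]; first by right; rewrite pa0 pb0 addn0.
case: (eqVneq (state t) (pivot, k)) => [fin|nf].
  by left; rewrite stateS -stateE fin merge_step_final.
right; case: IH => [fin|IH]; first by rewrite fin eqxx in nf.
by case: (pointer_stepP nf) => -[-> -> _]; lia.
Qed.

Lemma state_size : state k = (pivot, k).
Proof.
case: (state_progress k) => // h; rewrite stateE.
have := pa_le_pivot k; have := pb_le_size k; have := pivot_lt_size.
by move=> *; congr pair; lia.
Qed.

Lemma exists_final : exists t, state t == (pivot, k).
Proof. by exists k; rewrite state_size. Qed.

Definition nsteps := ex_minn exists_final.

Lemma state_nsteps : state nsteps = (pivot, k).
Proof. by rewrite /nsteps; case: ex_minnP => m /eqP. Qed.

Lemma state_lt_nsteps {t} : (t < nsteps)%N -> state t != (pivot, k).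
Proof.
by rewrite /nsteps; case: ex_minnP => m _ minm; apply: contraTN => /minm; rewrite leqNgt.
Qed.

Lemma pa_nsteps : pa nsteps = pivot. Proof. by rewrite /pa state_nsteps. Qed.
Lemma pb_nsteps : pb nsteps = k. Proof. by rewrite /pb state_nsteps. Qed.

Lemma nsteps_gt0 : (0 < nsteps)%N.
Proof.
rewrite lt0n; apply/negP => /eqP n0; have := pa_nsteps; rewrite n0 pa0 => p0.
by have := pivot_ge2; rewrite -p0.
Qed.

Definition double_step t := (pa t.+1 != pa t) && (pb t.+1 != pb t).

Lemma size_eq_nsteps_add_doubles : k = (nsteps + \sum_(t < nsteps) double_step t)%N.
Proof.
have E : (\sum_(t < nsteps) ((pa t.+1 - pa t) + (pb t.+1 - pb t))
          = \sum_(t < nsteps) (1 + double_step t))%N.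
  apply: eq_bigr => t _; rewrite /double_step.
  by case: (pointer_stepP (state_lt_nsteps (ltn_ord t))) => -[-> -> _];
    rewrite ?eqxx ?gtn_eqF ?subSnn ?subnn.
move: E; rewrite !big_split /= (telescope_sumn_ord _ pa_mono) (telescope_sumn_ord _ pb_mono).
rewrite pa_nsteps pb_nsteps pa0 pb0 sum_nat_const card_ord muln1.
by have := pivot_lt_size; lia.
Qed.

Lemma double_step_adv_ab {t} : (t < nsteps)%N -> double_step t -> adv_ab (pa t) (pb t).
Proof.
move=> tN; rewrite /double_step.
by case: (pointer_stepP (state_lt_nsteps tN)) => -[-> -> h]; rewrite ?eqxx ?andbF.
Qed.

Lemma double_step_at_parallel t : (t < nsteps)%N -> (pa t < pivot)%N -> (pb t < k)%N ->
  C (pa t) (pb t) = 0 -> double_step t.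
Proof.
move=> tN ap bk c0; rewrite /double_step.
case: (pointer_stepP (state_lt_nsteps tN)) => -[-> -> []].
- by move=> _ _ /(_ bk); rewrite c0 ltxx.
- by move=> _ _ _ /(_ ap); rewrite c0 ltxx.
- by rewrite !gtn_eqF.
Qed.

Lemma ocross_gt0_decr_back {i b l} :
  (i < pivot)%N -> (pivot <= b)%N -> (b < l)%N -> (l < k)%N -> 0 <= C i l -> 0 < C i b.
Proof.
move=> ip pb bl lk cil.
have [_ T _] := halfplane_ocross_trans sg_sq dot_side0_gt0
  (back_in_halfplane pb (ltn_trans bl lk))
  (back_in_halfplane (leq_trans pb (ltnW bl)) lk) (front_in_halfplane ip).
by rewrite -ocrossNlC; apply: T; rewrite ?ocrossNN ?ocrossNlC //; exact: ocross_back.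
Qed.

Lemma ocross_lt0_decr_front {i' i l} :
  (i' < i)%N -> (i < pivot)%N -> (pivot <= l)%N -> (l < k)%N -> C i l <= 0 -> C i' l < 0.
Proof.
move=> i'i ip pl lk cil.
have [_ T _] := halfplane_ocross_trans sg_sq dot_side0_gt0
  (front_in_halfplane (ltn_trans i'i ip)) (front_in_halfplane ip)
  (back_in_halfplane pl lk).
rewrite -oppr_gt0 -ocrossNr; apply: T; first exact: ocross_front.
by rewrite ocrossNr oppr_ge0.
Qed.

Lemma pb_at_front_step {t i l} : (t < nsteps)%N -> pa t = i -> pa t.+1 = i.+1 ->
  (pivot <= l)%N -> (l < k)%N -> C i l = 0 -> (l <= pb t)%N.
Proof.
move=> tN ati at1 pl lk c0; rewrite leqNgt; apply/negP => bl.
have ip : (i < pivot)%N by rewrite -ltnS -at1 ltnS pa_le_pivot.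
have := ocross_gt0_decr_back ip (pivot_le_pb t) bl lk; rewrite c0 lexx => /(_ isT).
case: (pointer_stepP (state_lt_nsteps tN)) => -[ea _ []].
- by move=> _ _ /(_ (ltn_trans bl lk)); rewrite ati => /lt_gtF ->.
- by move: ea; rewrite at1 ati => /esym /n_Sn.
- by move=> _ _ _; rewrite ati => ->; rewrite ltxx.
Qed.

Lemma pa_at_back_step {t i l} : (t < nsteps)%N -> pb t = l -> pb t.+1 = l.+1 ->
  (i < pivot)%N -> C i l = 0 -> (i <= pa t)%N.
Proof.
move=> tN btl bt1 ip c0; rewrite leqNgt; apply/negP => ai.
have pl : (pivot <= l)%N by rewrite -btl pivot_le_pb.
have lk : (l < k)%N by rewrite -ltnS -bt1 ltnS pb_le_size.
have := ocross_lt0_decr_front ai ip pl lk; rewrite c0 lexx => /(_ isT).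
case: (pointer_stepP (state_lt_nsteps tN)) => -[_ eb []].
- by move: eb; rewrite bt1 btl => /esym /n_Sn.
- by move=> _ _ _ /(_ (ltn_trans ai ip)); rewrite btl => /lt_gtF ->.
- by move=> _ _ _; rewrite btl => ->; rewrite ltxx.
Qed.

(* Both pointers pass the pair (i, l), and neither can overtake it alone. *)
Lemma parallel_pair_double_step i l : (i < l)%N -> (l < k)%N -> C i l = 0 ->
  exists2 t, (t < nsteps)%N & [/\ double_step t, pa t = i & pb t = l].
Proof.
move=> il lk c0.
have ip : (i < pivot)%N.
  by rewrite ltnNge; apply/negP => pi; have := ocross_back pi il lk; rewrite c0 ltxx.
have pl : (pivot <= l)%N.
  by rewrite leqNgt; apply/negP => lp; have := ocross_front il lp; rewrite c0 ltxx.
have [t [tN ati at1]] : exists t, [/\ (t < nsteps)%N, pa t = i & pa t.+1 = i.+1].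
  by apply: exists_succ_crossing; rewrite ?pa0 ?pa_nsteps //; exact: pa_le_succ.
have dbl t' : (t' < nsteps)%N -> pa t' = i -> pb t' = l ->
    exists2 t, (t < nsteps)%N & [/\ double_step t, pa t = i & pb t = l].
  move=> t'N ai bl; exists t' => //; split => //.
  by apply: double_step_at_parallel; rewrite ?ai ?bl.
case: (ltngtP l (pb t)) => [lb|bl|lb]; last exact: dbl tN ati (esym lb).
  have [t' [t't bt' bt1]] : exists t', [/\ (t' < t)%N, pb t' = l & pb t'.+1 = l.+1].
    by apply: exists_succ_crossing; rewrite ?pb0 //; exact: pb_le_succ.
  have t'N := ltn_trans t't tN.
  have ai : pa t' = i.
    apply/eqP; rewrite eqn_leq (pa_at_back_step t'N bt' bt1 ip c0) andbT.
    by rewrite -ati pa_mono // ltnW.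
  exact: dbl t'N ai bt'.
by have := pb_at_front_step tN ati at1 pl lk c0; rewrite leqNgt bl.
Qed.

Lemma double_step_inj t1 t2 : double_step t1 -> double_step t2 -> pa t1 = pa t2 -> t1 = t2.
Proof.
have paS t : double_step t -> pa t.+1 = (pa t).+1.
  by case/andP => /eqP ne _; case: (state_step_le t) => /andP [] ? ? _; lia.
move=> d1 d2 e12.
by case: (ltngtP t1 t2) => // lt; have := pa_mono _ _ lt; rewrite paS // e12; lia.
Qed.

Definition side_pair (t : 'I_nsteps) : 'I_k * 'I_k :=
  (Ordinal (ltn_pmod (pa t) size_gt0), Ordinal (ltn_pmod (pb t) size_gt0)).

Lemma parallel_pairs_image :
  [set ij : 'I_k * 'I_k | (ij.1 < ij.2)%N && (cross (e ij.1) (e ij.2) == 0)] =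
  side_pair @: [set t : 'I_nsteps | double_step t].
Proof.
have pk := pivot_lt_size.
apply/setP => -[i l]; rewrite inE /=; apply/idP/imsetP.
- case/andP => il /eqP c0.
  have [t tN [dt ai bl]] : exists2 t, (t < nsteps)%N & [/\ double_step t, pa t = i & pb t = l].
    by apply: parallel_pair_double_step; rewrite /ocross ?c0 ?mulr0.
  exists (Ordinal tN); first by rewrite inE.
  by congr pair; apply: val_inj; rewrite /= ?ai ?bl modn_small.
- case=> t; rewrite inE => dt [-> ->] /=.
  have [_ ap bk c0] := double_step_adv_ab (ltn_ord t) dt.
  rewrite !modn_small ?(ltn_trans ap pk) //.
  by rewrite (leq_trans ap (pivot_le_pb t)) /= (ocross_eq0 sg_sq c0).
Qed.

Lemma num_parallel_pairs_doubles : num_parallel_pairs s = (\sum_(t < nsteps) double_step t)%N.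
Proof.
rewrite /num_parallel_pairs parallel_pairs_image card_in_imset.
  by rewrite -sum1_card big_mkcond; apply: eq_bigr => t _; rewrite inE; case: (double_step t).
move=> t1 t2; rewrite !inE => d1 d2 [e1 _]; apply/val_inj/double_step_inj => //.
by rewrite !modn_small ?(leq_ltn_trans (pa_le_pivot _) pivot_lt_size) in e1.
Qed.

(* [e x] lies angularly between the two sides at [v y], so the line through
   [v y] parallel to [e x] is a supporting line of the polygon. *)
Lemma supporting_degenerate_side x y : (0 < y)%N -> C x y.-1 * C x y <= 0 ->
  degenerate_side s (v x) (v x.+1) (v y) (v y).
Proof.
move=> y0 hc; split => //; split => [|t]; first exact: vtx_succ_neq.
set P := padd _ _.
have X1 : cross (e (y.-1 %% k)) (psub P (v (y.-1 %% k))) = t * cross (e y.-1) (e x).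
  rewrite side_dir_mod vtx_mod /P /side_dir (prednK y0) /cross /psub /padd /pscale /=; ring.
have X2 : cross (e (y %% k)) (psub P (v (y %% k))) = t * cross (e y) (e x).
  rewrite side_dir_mod vtx_mod /P /side_dir /cross /psub /padd /pscale /=; ring.
have c12 : cross (e y.-1) (e x) * cross (e y) (e x) <= 0.
  by move: hc; rewrite ocrossC [ocross sg (e x) (e y)]ocrossC mulrNN ocrossM.
have i1 := ltn_pmod y.-1 size_gt0; have i2 := ltn_pmod y size_gt0.
case=> H; have := H _ i1; have := H _ i2; rewrite X1 X2; move: c12;
  move: (cross (e y.-1) (e x)) (cross (e y) (e x)) => *; nra.
Qed.

Lemma parallel_sides_ocross0 x y : C x y = 0 -> parallel_sides (v x) (v x.+1) (v y) (v y.+1).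
Proof. by move/(ocross_eq0 sg_sq) => c0; split; [|split] => //; exact: vtx_succ_neq. Qed.

Definition merged := [seq v (pa t) | t <- iota 0 nsteps] ++ [seq v (pb t) | t <- iota 0 nsteps].

Lemma size_merged : size merged = (nsteps + nsteps)%N.
Proof. by rewrite size_cat !size_map size_iota. Qed.

Lemma nth_merged m : (m < nsteps + nsteps)%N ->
  nth (0, 0) merged m = if (m < nsteps)%N then v (pa m) else v (pb (m - nsteps)).
Proof.
move=> mN; rewrite nth_cat size_map size_iota; case: ifP => h.
  by rewrite (nth_map 0%N) ?size_iota // nth_iota.
by rewrite (nth_map 0%N) ?size_iota ?nth_iota //; lia.
Qed.

Lemma vtx_merged_front {t} : (t <= nsteps)%N -> vtx merged t = v (pa t).
Proof.
move=> tN; have n0 := nsteps_gt0.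
rewrite /vtx size_merged modn_small ?nth_merged; try lia.
case: ifP => h //; have -> : t = nsteps by lia.
by rewrite subnn pb0 pa_nsteps.
Qed.

Lemma vtx_merged_back {t} : (t <= nsteps)%N -> vtx merged (t + nsteps) = v (pb t).
Proof.
move=> tN; have n0 := nsteps_gt0; rewrite [vtx merged _]/vtx size_merged.
case: (ltngtP t nsteps) => [lt|gt|->]; last 2 first.
- lia.
- by rewrite modnn nth_merged ?addn_gt0 ?n0 // pb_nsteps pa0 -[v k]vtx_mod modnn.
by rewrite modn_small ?nth_merged ?addnK ?ifN //; rewrite ?ltn_add2r //; lia.
Qed.

(* The back pointer reaches [k], which is vertex [0] again. *)
Definition merged_index m := if (m < nsteps)%N then pa m else (pb (m - nsteps) %% k)%N.

Lemma merged_index_succ m : (m < nsteps + nsteps)%N ->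
  merged_index (m.+1 %% (nsteps + nsteps)) =
  if (m < nsteps)%N then pa m.+1 else (pb (m.+1 - nsteps) %% k)%N.
Proof.
have n0 := nsteps_gt0; have pk := pivot_lt_size.
move=> mN; case: (ltngtP m.+1 (nsteps + nsteps)) => [lt|gt|eq]; last 2 first.
- lia.
- by rewrite eq modnn /merged_index n0 pa0 ifN ?addnK ?pb_nsteps ?modnn //; lia.
rewrite modn_small // /merged_index.
case: (ltngtP m.+1 nsteps) => [//|//|eq].
by rewrite eq subnn pb0 pa_nsteps modn_small.
Qed.

Lemma pb_mod_step t : ((pb t.+1 %% k != pb t %% k)%N : nat) = (pb t.+1 - pb t)%N.
Proof.
case: (state_step_le t) => _ /andP [h1 h2]; have bk := pb_le_size t.+1.
case: (eqVneq (pb t.+1) (pb t)) => [->|/eqP ne]; first by rewrite eqxx subnn.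
have bS : pb t.+1 = (pb t).+1 by lia.
rewrite bS subSnn [(pb t %% k)%N]modn_small; last lia.
case: (ltngtP (pb t).+1 k) => [lt||eq]; [by rewrite modn_small // gtn_eqF | lia |].
have b0 : (0 < pb t)%N by apply: leq_trans (pivot_le_pb t); case: pivotP.
by rewrite eq modnn eq_sym -lt0n b0.
Qed.

Lemma merged_indexP m : (m < size merged)%N ->
  (merged_index m < k)%N /\ vtx merged m = v (merged_index m).
Proof.
rewrite size_merged /merged_index => mN; case: ifP => h.
  by rewrite vtx_merged_front ?(ltnW h) // (leq_ltn_trans (pa_le_pivot m) pivot_lt_size).
rewrite ltn_pmod ?size_gt0 // vtx_mod -vtx_merged_back ?subnK //; lia.
Qed.

Lemma merged_index_step m : (m < size merged)%N ->
  merged_index (m.+1 %% size merged) = merged_index m \/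
  merged_index (m.+1 %% size merged) = ((merged_index m).+1 %% k)%N.
Proof.
rewrite size_merged => mN; rewrite merged_index_succ // /merged_index; case: ifP => h.
  case: (state_step_le m) => /andP [h1 h2] _.
  case: (eqVneq (pa m.+1) (pa m)) => [->|/eqP ne]; [by left | right].
  by rewrite modn_small; have := pa_le_pivot m.+1; have := pivot_lt_size; lia.
have -> : (m.+1 - nsteps = (m - nsteps).+1)%N by lia.
case: (state_step_le (m - nsteps)) => _ /andP [h1 h2].
case: (eqVneq (pb (m - nsteps).+1) (pb (m - nsteps))) => [->|/eqP ne]; [by left | right].
have -> : pb (m - nsteps).+1 = (pb (m - nsteps)).+1 by lia.
by rewrite modSn.
Qed.

Lemma card_merged_index_moves :
  #|[set m : 'I_(size merged) | merged_index (m.+1 %% size merged) != merged_index m]| = k.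
Proof.
pose moved m := merged_index (m.+1 %% size merged) != merged_index m.
rewrite -sum1_card big_mkcond (eq_bigr (fun m : 'I__ => nat_of_bool (moved m))) => [|m _];
  last first.
  by rewrite inE /moved; case: (_ != _).
rewrite -(big_mkord xpredT (fun m => nat_of_bool (moved m))) size_merged big_mkord.
rewrite big_split_ord /=.
rewrite (eq_bigr (fun i : 'I_nsteps => (pa i.+1 - pa i)%N)); last first.
  move=> i _; rewrite /moved size_merged merged_index_succ; last by have := ltn_ord i; lia.
  by rewrite /merged_index ltn_ord neq_subn //; case: (state_step_le i).
rewrite [X in (_ + X)%N](eq_bigr (fun i : 'I_nsteps => (pb i.+1 - pb i)%N)); last first.
  move=> i _; rewrite /moved size_merged merged_index_succ; last by have := ltn_ord i; lia.
  rewrite /merged_index !ifN -?leqNgt ?leq_addr //.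
  by rewrite -addnS !(addKn nsteps) pb_mod_step.
rewrite (telescope_sumn_ord _ pa_mono) (telescope_sumn_ord _ pb_mono).
rewrite pa_nsteps pb_nsteps pa0 pb0.
by have := pivot_lt_size; lia.
Qed.

Lemma merged_relisting : vertex_relisting s merged.
Proof.
exists merged_index; split; [exact: merged_indexP | split].
  exact: merged_index_step.
exact: card_merged_index_moves.
Qed.

Lemma nsteps_eq : nsteps = (k - num_parallel_pairs s)%N.
Proof. by rewrite num_parallel_pairs_doubles {1}size_eq_nsteps_add_doubles addnK. Qed.

Lemma merged_paired : opposite_sides_paired s merged nsteps.
Proof.
split; first by rewrite size_merged mul2n addnn.
split=> [|i iN]; first exact: merged_relisting.
rewrite (vtx_merged_front (ltnW iN)) (vtx_merged_front iN) (vtx_merged_back (ltnW iN)).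
rewrite -addSn (vtx_merged_back iN).
case: (pointer_stepP (state_lt_nsteps iN)) => -[-> ->].
- case=> _ _ _ hd; right; left; apply: supporting_degenerate_side => //.
  by apply: leq_trans (pivot_le_pb i); case: pivotP.
- by case=> _ _ a0 _ hd; right; right; apply: supporting_degenerate_side.
- by case=> _ _ _ c0; left; apply: parallel_sides_ocross0.
Qed.

Lemma exists_paired_relisting :
  exists Q, opposite_sides_paired s Q (k - num_parallel_pairs s).
Proof. by rewrite -nsteps_eq; exists merged; exact: merged_paired. Qed.

End ConvexPolygon.

Lemma convex_polygon_orientation {R : realFieldType} {s : seq (pt R)} : convex_polygon s ->
  exists2 sg : R, sg * sg = 1 & forall i j, (i < size s)%N -> (j < size s)%N -> j != i ->
    j != (i.+1 %% size s)%N -> 0 < ocross sg (side_dir s i) (psub (vtx s j) (vtx s i)).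
Proof.
case=> _ [H|H]; [exists 1 | exists (-1)]; rewrite ?mulr1 ?mulrNN ?mulr1 // => i j *.
- by rewrite /ocross mul1r; exact: H.
- by rewrite /ocross mulN1r oppr_gt0; exact: H.
Qed.

Theorem lemma2p2 (R : realFieldType) (s : seq (pt R)) (j : nat)
  (Hconv : convex_polygon s)
  (Hpar : num_parallel_pairs s = j)
  (Hj : (2 * j <= size s)%N) :
  exists Q : seq (pt R),
    size Q = (2 * (size s - j))%N /\
    vertex_relisting s Q /\
    forall i, (i < size s - j)%N ->
      parallel_sides (vtx Q i) (vtx Q i.+1)
                     (vtx Q (i + (size s - j))) (vtx Q (i + (size s - j)).+1) \/
      degenerate_side s (vtx Q i) (vtx Q i.+1)
                        (vtx Q (i + (size s - j))) (vtx Q (i + (size s - j)).+1) \/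
      degenerate_side s (vtx Q (i + (size s - j))) (vtx Q (i + (size s - j)).+1)
                        (vtx Q i) (vtx Q i.+1).
Proof.
have [size_ge3 _] := Hconv; have [sg sg_sq convex] := convex_polygon_orientation Hconv.
by rewrite -Hpar; exact: exists_paired_relisting sg_sq size_ge3 convex.
Qed.
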